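(* Every cactus graph of girth at least $4$ is $(2,1)$-colorable.
   Context: A cactus graph is a graph in which every $2$-connected component (block) is either a cycle or a single edge $K_2$. The girth is the length of a shortest cycle (infinite if acyclic). A set of vertices $X$ is $2$-independent if any two distinct vertices of $X$ are at distance at least $3$. A graph is $(a,b)$-colorable if its vertex set can be partitioned into $a$ independent sets and $b$ $2$-independent sets (some parts may be empty). *)

From mathcomp Require Import all_boot.
Set Implicit Arguments. Unset Strict Implicit. Unset Printing Implicit Defensive.

Section Graphs.
Variables (T : finType) (e : rel T).

Definition simple_graph : Prop := symmetric e /\ irreflexive e.

Definition induced_rel (S : {set T}) : rel T :=
  fun x y => [&& x \in S, y \in S & e x y].

Definition connected_on (S : {set T}) : Prop :=
  S != set0 /\ forall x y, x \in S -> y \in S -> connect (induced_rel S) x y.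

Definition nonseparable_on (S : {set T}) : Prop :=
  connected_on S /\
  forall v, v \in S -> forall x y, x \in S :\ v -> y \in S :\ v ->
    connect (induced_rel (S :\ v)) x y.

Definition is_block (S : {set T}) : Prop :=
  1 < #|S| /\ nonseparable_on S /\
  forall S' : {set T}, S \subset S' -> 1 < #|S'| -> nonseparable_on S' -> S' = S.

Definition is_K2_on (S : {set T}) : Prop :=
  exists x y, x != y /\ S = [set x; y] /\ e x y.

Definition is_cycle_on (S : {set T}) : Prop :=
  exists s : seq T, [/\ uniq s, 3 <= size s, S = [set x in s] &
    forall x y, x \in S -> y \in S ->
      e x y = (y == next s x) || (x == next s y)].

Definition cactus : Prop :=
  forall S, is_block S -> is_K2_on S \/ is_cycle_on S.

(* girth >= 4 : no cycle of length 3 (no cycles of length < 3 exist in a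
   simple graph) *)
Definition girth_ge4 : Prop :=
  forall x y z, e x y -> e y z -> e z x -> False.

Definition independent (X : {set T}) : Prop :=
  forall x y, x \in X -> y \in X -> ~~ e x y.

(* any two distinct vertices at distance >= 3 (possibly infinite) *)
Definition two_independent (X : {set T}) : Prop :=
  forall x y, x \in X -> y \in X -> x != y ->
    ~~ e x y /\ forall z, ~~ (e x z && e z y).

(* partition into a independent sets and b 2-independent sets:
   colour classes f^-1(i) for i < a independent, the others 2-independent *)
Definition ab_colorable (a b : nat) : Prop :=
  exists f : T -> 'I_(a + b),
    forall i : 'I_(a + b),
      if i < a then independent [set x | f x == i]
      else two_independent [set x | f x == i].

End Graphs.

From mathcomp Require Import all_boot zify.
From Stdlib Require Import Classical.
Set Implicit Arguments. Unset Strict Implicit. Unset Printing Implicit Defensive.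

(* Induct on vertex sets S, keeping for every r in S two colourings of G[S]:
   one giving r the 2-independent colour 2, and one giving r and all its
   neighbours the independent colours 0 and 1.  If G[S] has a cut vertex u,
   colour the side containing r as required and colour the other side so that
   u keeps its colour: when u has colour 2 its neighbours on both sides avoid
   colour 2 anyway, and otherwise the second colouring of that side (with 0
   and 1 swapped if necessary) keeps colour 2 away from u.  Without a cut
   vertex, G[S] lies in a block, hence in a cycle of length at least 4 (or S
   has at most two vertices), and cycles are coloured explicitly. *)

Lemma index_next (T : eqType) (s : seq T) x : uniq s -> x \in s ->
  index (next s x) s = (index x s).+1 %% size s.
Proof.
case: s => [//|y s] s_uniq xs; rewrite next_nth xs.
have : index x (y :: s) < size (y :: s) by rewrite index_mem.
set i := index x _ => lt_i; rewrite /= in lt_i.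
have [lt_is|le_si] := ltnP i (size s).
- have -> : nth y s i = nth y (y :: s) i.+1 by [].
  by rewrite index_uniq // modn_small.
- by rewrite nth_default //= eqxx (_ : i.+1 = (size s).+1) ?modnn //; lia.
Qed.

Lemma modn_succ_cases i n : i < n ->
  i.+1 = n /\ i.+1 %% n = 0 \/ i.+1 < n /\ i.+1 %% n = i.+1.
Proof.
rewrite leq_eqVlt => /orP[/eqP <-|lt_in]; first by left; rewrite modnn.
by right; rewrite modn_small.
Qed.

Definition swap01 (c : nat) : nat := if c < 2 then 1 - c else c.

Lemma swap01K : involutive swap01.
Proof. by move=> [|[|c]]. Qed.

Lemma swap01_lt2 c : (swap01 c < 2) = (c < 2).
Proof. by case: c => [|[|c]]. Qed.

Lemma swap01_eq2 c : swap01 c = 2 -> c = 2.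
Proof. by case: c => [|[|c]]. Qed.

Section Coloring21.
Variables (T : finType) (e : rel T).

(* Colours 0 and 1 are the independent classes and 2 the 2-independent one;
   non-adjacency of two vertices of colour 2 is already part of properness. *)
Definition coloring21 (S : {set T}) (f : T -> nat) : Prop :=
  [/\ {in S, forall x, f x <= 2},
      {in S &, forall x y, e x y -> f x != f y} &
      {in S & &, forall x y z, f x = 2 -> f y = 2 -> e x z -> e z y -> x = y}].

Definition colorable2_at (S : {set T}) (r : T) : Prop :=
  exists2 f, coloring21 S f & f r = 2.

Definition colorable01_around (S : {set T}) (r : T) : Prop :=
  exists f, [/\ coloring21 S f, f r < 2 & {in S, forall z, e r z -> f z < 2}].

Definition rooted_colorable (S : {set T}) (r : T) : Prop :=
  colorable2_at S r /\ colorable01_around S r.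

Lemma coloring21_sub (S B : {set T}) f :
  S \subset B -> coloring21 B f -> coloring21 S f.
Proof.
move=> /subsetP sSB [le2 proper indep].
by split; [exact: sub_in1 le2 | exact: sub_in2 proper | exact: sub_in3 indep].
Qed.

Lemma rooted_colorable_sub (S B : {set T}) r :
  S \subset B -> rooted_colorable B r -> rooted_colorable S r.
Proof.
move=> sSB [[f f_col fr] [g [g_col gr g_nbr]]]; split.
  by exists f => //; apply: coloring21_sub f_col.
exists g; split=> //; first exact: coloring21_sub g_col.
by move=> z /(subsetP sSB); apply: g_nbr.
Qed.

Lemma coloring21_swap01 (S : {set T}) f : coloring21 S f -> coloring21 S (swap01 \o f).
Proof.
move=> [le2 proper indep]; split=> [x xS|x y xS yS xy|x y z xS yS zS] /=.
- by have := le2 x xS; rewrite /swap01; case: ifP => _; lia.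
- by rewrite (inj_eq (can_inj swap01K)) proper.
- by move=> /swap01_eq2 fx /swap01_eq2 fy; apply: indep.
Qed.

Lemma colorable21_of_rooted (S : {set T}) :
  {in S, forall x, rooted_colorable S x} -> exists f, coloring21 S f.
Proof.
case: (set_0Vmem S) => [->|[x xS] col]; first by exists (fun=> 0); split=> x; rewrite inE.
by have [[f f_col _] _] := col x xS; exists f.
Qed.

Lemma coloring21_extend (S : {set T}) u c : {in S, forall x, rooted_colorable S x} ->
  exists2 f, coloring21 S f & u \in S -> c <= 2 ->
    f u = c /\ (c = 2 \/ {in S, forall w, e u w -> f w < 2}).
Proof.
move=> col; case: (boolP ((u \in S) && (c <= 2))) => [/andP[uS c_le2]|uNc]; last first.
  have [f f_col] := colorable21_of_rooted col.
  by exists f => // uS c_le2; rewrite uS c_le2 in uNc.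
have [[f f_col fu] [g [g_col gu g_nbr]]] := col u uS.
have [c2|c_neq2] := eqVneq c 2; first by exists f => // _ _; split; [rewrite fu | left].
have [guc|gNc] := eqVneq (g u) c; first by exists g => // _ _; split => //; right.
exists (swap01 \o g); first exact: coloring21_swap01.
move=> _ _; split; last by right=> w wS uw; rewrite /= swap01_lt2 g_nbr.
by rewrite /= /swap01 gu; lia.
Qed.

Section SmallSets.
Variables (S : {set T}) (r : T).
Hypotheses (e_irr : irreflexive e) (S_le2 : #|S| <= 2) (rS : r \in S).

Lemma coloring21_small a b : a <= 2 -> b < 2 -> a != b ->
  coloring21 S (fun x => if x == r then a else b).
Proof.
move=> a_le2 b_lt2 a_neq_b.
have other x y : x \in S -> y \in S -> x != r -> y != r -> x = y.
  move=> xS yS xNr yNr; have : #|S :\ r| <= 1 by move: S_le2; rewrite (cardsD1 r) rS.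
  by move/card_le1_eqP; apply; rewrite !inE ?xNr ?yNr.
split=> [x _|x y xS yS xy|x y z xS yS _].
- by case: eqP => _; lia.
- have xNy : x != y by apply: contraTneq xy => ->; rewrite e_irr.
  case: (eqVneq x r) => [xr|xNr]; case: (eqVneq y r) => [yr|yNr] //.
  + by move: xNy; rewrite xr yr eqxx.
  + by rewrite eq_sym.
  + by move: xNy; rewrite (other x y) ?eqxx.
- case: (eqVneq x r) => [->|_]; case: (eqVneq y r) => [->|_] //; lia.
Qed.

Lemma rooted_colorable_small : rooted_colorable S r.
Proof.
split.
  by exists (fun x => if x == r then 2 else 0); [exact: coloring21_small | rewrite eqxx].
exists (fun x => if x == r then 0 else 1).
split; [exact: coloring21_small | by rewrite eqxx |].
by move=> z _ rz; case: (z == r).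
Qed.

End SmallSets.

Definition cycle_adj (s : seq T) : Prop :=
  forall x y, x \in s -> y \in s -> e x y = (y == next s x) || (x == next s y).

(* A colouring of the indices of an n-cycle that uses colour 2 at most once,
   so that the colour-2 class is trivially 2-independent. *)
Definition cycle_coloring21 (n : nat) (c : nat -> nat) : Prop :=
  [/\ forall i, i < n -> c i <= 2,
      forall i, i < n -> c i != c (i.+1 %% n) &
      forall i j, i < n -> j < n -> c i = 2 -> c j = 2 -> i = j].

Section Cycle.
Variable s : seq T.
Hypotheses (s_uniq : uniq s) (s_adj : cycle_adj s).

Lemma coloring21_of_cycle c : cycle_coloring21 (size s) c ->
  coloring21 [set x in s] (fun x => c (index x s)).
Proof.
case=> c_le2 c_proper c_2; split.
- by move=> x; rewrite inE -index_mem; apply: c_le2.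
- move=> x y; rewrite !inE => xs ys; rewrite s_adj // => /orP[]/eqP->.
    by rewrite index_next // c_proper ?index_mem.
  by rewrite index_next // eq_sym c_proper ?index_mem.
- move=> x y z; rewrite !inE => xs ys _ cx cy _ _.
  by apply: (index_inj x xs ys); apply: c_2; rewrite ?index_mem.
Qed.

Lemma cycle_size_neq3 : girth_ge4 e -> size s != 3.
Proof.
move=> girth; apply/eqP => s3; have [x xs] : exists x, x \in s.
  by case: s s3 => // x s' _; exists x; rewrite inE eqxx.
set y := next s x; set z := next s y.
have [ys zs] : y \in s /\ z \in s by rewrite !mem_next.
apply: (girth x y z); rewrite s_adj ?eqxx //.
apply/orP; left; apply/eqP; apply: (@index_inj _ x s); rewrite ?mem_next //.
by have := index_mem x s; rewrite !index_next ?mem_next // xs s3; lia.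
Qed.

End Cycle.

Lemma cycle_on_rot (B : {set T}) r : is_cycle_on e B -> r \in B ->
  exists s, [/\ uniq (r :: s), cycle_adj (r :: s), B = [set x in r :: s]
               & 2 <= size s].
Proof.
move=> [s [s_uniq s_size -> adj]]; rewrite inE => rs.
case: (rot_to rs) => i s' rot_eq; exists s'.
have /= size_s' : size (r :: s') = size s by rewrite -rot_eq size_rot.
have uniq_s' : uniq (r :: s') by rewrite -rot_eq rot_uniq.
split=> //; rewrite -?rot_eq; last by rewrite -ltnS size_s'.
  by move=> x y xs ys; rewrite !next_rot // adj // inE -(mem_rot i).
by apply/setP => x; rewrite !inE mem_rot.
Qed.

Lemma cycle_nbr_head r s : uniq (r :: s) -> cycle_adj (r :: s) -> 1 <= size s ->
  forall z, z \in r :: s -> e r z ->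
  index z (r :: s) = 1 \/ (index z (r :: s)).+1 = size (r :: s).
Proof.
move=> s_uniq s_adj s_size z zs; have rs : r \in r :: s := mem_head r s.
have index_r : index r (r :: s) = 0 by rewrite /= eqxx.
rewrite s_adj // => /orP[]/eqP => [->|/(congr1 (index^~ (r :: s)))].
  by left; rewrite index_next // index_r modn_small.
have := index_mem z (r :: s); rewrite zs index_next // index_r.
by case/modn_succ_cases => [][? ->] //; right.
Qed.

Definition color_root2 (i : nat) : nat := if i == 0 then 2 else i %% 2.
Definition color_parity (i : nat) : nat := i %% 2.
(* Odd cycles need colour 2; at index 2 it avoids both neighbours 1 and n-1
   of the root. *)
Definition color_odd_cycle (i : nat) : nat :=
  if i == 2 then 2 else if i < 2 then i else i.+1 %% 2.

Lemma cycle_coloring21_root2 n : 3 <= n -> cycle_coloring21 n color_root2.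
Proof.
move=> n3; rewrite /color_root2; split=> [[|i] _|i|[|i] [|j] _ _] /=; try lia.
by case: i => [|i] lt_in; case: (modn_succ_cases lt_in) => [][? ->] /=; lia.
Qed.

Lemma cycle_coloring21_parity n : n %% 2 = 0 -> cycle_coloring21 n color_parity.
Proof.
move=> n_even; rewrite /color_parity; split=> [i _|i lt_in|i j _ _].
- lia.
- by case: (modn_succ_cases lt_in) => [][? ->]; lia.
- lia.
Qed.

Lemma cycle_coloring21_odd n : n %% 2 = 1 -> 5 <= n ->
  cycle_coloring21 n color_odd_cycle.
Proof.
move=> n_odd n5; rewrite /color_odd_cycle.
split=> [[|[|[|i]]] _|i|[|[|[|i]]] [|[|[|j]]] _ _] /=; try lia.
by case: i => [|[|[|i]]] lt_in; case: (modn_succ_cases lt_in) => [][? ->] /=; lia.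
Qed.

Lemma cycle_rooted_colorable (B : {set T}) r :
  girth_ge4 e -> is_cycle_on e B -> r \in B -> rooted_colorable B r.
Proof.
move=> girth cycB rB; have [s [s_uniq s_adj -> s_size]] := cycle_on_rot cycB rB.
set n := size (r :: s); have n_eq : n = (size s).+1 by [].
have n_neq3 : n != 3 := cycle_size_neq3 s_uniq s_adj girth.
have index_r : index r (r :: s) = 0 by rewrite /= eqxx.
have around c : cycle_coloring21 n c -> c 0 < 2 -> c 1 < 2 -> c n.-1 < 2 ->
    colorable01_around [set x in r :: s] r.
  move=> c_col c0 c1 cn; exists (fun x => c (index x (r :: s))).
  split; [exact: coloring21_of_cycle | by rewrite index_r |].
  move=> z; rewrite inE => zs.
  case/(cycle_nbr_head s_uniq s_adj (ltnW s_size) zs) => [->|idx] //.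
  by rewrite /n -idx in cn.
split.
  exists (fun x => color_root2 (index x (r :: s))); last by rewrite index_r.
  exact/coloring21_of_cycle/cycle_coloring21_root2.
have [n_even|n_odd] : n %% 2 = 0 \/ n %% 2 = 1 by lia.
  by apply: (around _ (cycle_coloring21_parity n_even)); rewrite /color_parity; lia.
apply: (around _ (cycle_coloring21_odd n_odd _)); rewrite /color_odd_cycle //=; try lia.
by do ?case: ifP => ?; lia.
Qed.

Definition no_cross_edges (S1 S2 : {set T}) : Prop :=
  forall a b, a \in S1 :\: S2 -> b \in S2 :\: S1 -> ~~ e a b.

Definition glue (S1 : {set T}) (f1 f2 : T -> nat) (z : T) : nat :=
  if z \in S1 then f1 z else f2 z.

Section Glue.
Variables (S1 S2 : {set T}) (u : T).
Hypotheses (e_sym : symmetric e) (cap : S1 :&: S2 \subset [set u])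
  (no_cross : no_cross_edges S1 S2).

Lemma edge_within_side a b : a \in S1 :|: S2 -> b \in S1 :|: S2 -> e a b ->
  (a \in S1) && (b \in S1) || (a \in S2) && (b \in S2).
Proof.
move=> aS bS ab; have ba : e b a by rewrite e_sym.
move: aS bS (@no_cross a b) (@no_cross b a); rewrite !inE ab ba.
by case: (a \in S1); case: (a \in S2); case: (b \in S1); case: (b \in S2); auto.
Qed.

Definition cut_compatible (f1 f2 : T -> nat) : Prop :=
  u \in S1 -> u \in S2 ->
    f1 u = f2 u /\ (f1 u = 2 \/ {in S2, forall w, e u w -> f2 w < 2}).

Lemma coloring21_glue f1 f2 : coloring21 S1 f1 -> coloring21 S2 f2 ->
  cut_compatible f1 f2 -> coloring21 (S1 :|: S2) (glue S1 f1 f2).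
Proof.
move=> [le1 pr1 in1] [le2 pr2 in2] compat.
have cap_u z : z \in S1 -> z \in S2 -> z = u.
  by move=> z1 z2; apply/set1P/(subsetP cap); rewrite inE z1 z2.
have glue1 z : z \in S1 -> glue S1 f1 f2 z = f1 z by rewrite /glue => ->.
have glue2 z : z \in S2 -> glue S1 f1 f2 z = f2 z.
  rewrite /glue; case: ifP => // z1 z2; have zu := cap_u z z1 z2; subst z.
  by case: (compat z1 z2).
have mixed x y : x \in S1 -> y \in S2 -> u \in S1 -> u \in S2 ->
    f1 x = 2 -> f2 y = 2 -> e x u -> e u y -> False.
  move=> x1 y2 u1 u2 fx fy xu uy; have [fu [fu2|nbr]] := compat u1 u2.
    by move: (pr1 x u x1 u1 xu); rewrite fx fu2 eqxx.
  by move: (nbr y y2 uy); rewrite fy.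
split=> [x|x y xS yS xy|x y z xS yS zS fx fy xz zy].
- by rewrite inE => /orP[x1|x2]; [rewrite glue1 // le1 | rewrite glue2 // le2].
- by case/orP: (edge_within_side xS yS xy) => /andP[x_ y_];
    [rewrite !glue1 // pr1 | rewrite !glue2 // pr2].
case/orP: (edge_within_side xS zS xz) => /andP[x_ z_];
  case/orP: (edge_within_side zS yS zy) => /andP[z' y_].
- by apply: (in1 x y z); rewrite -?glue1.
- have zu := cap_u z z_ z'; subst z; rewrite glue1 // in fx; rewrite glue2 // in fy.
  by case: (mixed x y x_ y_ z_ z' fx fy xz zy).
- have zu := cap_u z z' z_; subst z; rewrite glue2 // in fx; rewrite glue1 // in fy.
  rewrite e_sym in xz; rewrite e_sym in zy.
  by case: (mixed y x y_ x_ z' z_ fy fx zy xz).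
- by apply: (in2 x y z); rewrite -?glue2.
Qed.

Lemma rooted_colorable_union r :
  {in S1, forall x, rooted_colorable S1 x} ->
  {in S2, forall x, rooted_colorable S2 x} ->
  r \in S1 -> rooted_colorable (S1 :|: S2) r.
Proof.
move=> col1 col2 r1.
have glue_col f1 : coloring21 S1 f1 ->
    exists2 f2, coloring21 (S1 :|: S2) (glue S1 f1 f2) & cut_compatible f1 f2.
  move=> f1_col; have [f2 f2_col compat] := coloring21_extend u (f1 u) col2.
  have compat' : cut_compatible f1 f2.
    by case: f1_col => le1 _ _ u1 u2; have [-> ?] := compat u2 (le1 u u1).
  by exists f2 => //; apply: coloring21_glue.
split.
  have [[f1 f1_col f1r] _] := col1 r r1; have [f2 g_col _] := glue_col f1 f1_col.
  by exists (glue S1 f1 f2); rewrite // /glue r1.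
have [_ [f1 [f1_col f1r nbr1]]] := col1 r r1.
have [f2 g_col compat] := glue_col f1 f1_col.
exists (glue S1 f1 f2); split; rewrite // /glue ?r1 // => z zS rz.
case: ifP => z1; first exact: nbr1.
have rS : r \in S1 :|: S2 by rewrite inE r1.
case/orP: (edge_within_side rS zS rz) => /andP[r_ z_]; first by rewrite z_ in z1.
have ru : r = u by apply/set1P/(subsetP cap); rewrite inE r1.
rewrite ru in r1 r_ rz f1r; have [_ [fu2|nbr2]] := compat r1 r_; last exact: nbr2.
by rewrite fu2 in f1r.
Qed.

End Glue.

Lemma no_cross_edgesC (S1 S2 : {set T}) :
  symmetric e -> no_cross_edges S1 S2 -> no_cross_edges S2 S1.
Proof. by move=> e_sym no_cross a b a2 b1; rewrite e_sym no_cross. Qed.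

(* The witness [u] is a cut vertex of G[S], unless G[S] is disconnected. *)
Definition separable (S : {set T}) : Prop :=
  exists S1 S2 u, [/\ S1 :|: S2 = S, #|S1| < #|S|, #|S2| < #|S|,
                      S1 :&: S2 \subset [set u] & no_cross_edges S1 S2].

Lemma separable_of_disconnected (S W : {set T}) v x y :
  W \subset S -> S :\: W \subset [set v] -> x \in W -> y \in W ->
  ~~ connect (induced_rel e W) x y -> separable S.
Proof.
move=> /subsetP sWS /subsetP sSW_v xW yW xNy.
set K := [set z in W | connect (induced_rel e W) x z].
have K_W z : z \in K -> z \in W by rewrite inE => /andP[].
have K_closed a b : a \in K -> b \in W -> e a b -> b \in K.
  rewrite !inE => /andP[aW xa] bW ab; rewrite bW (connect_trans xa) //.
  by apply: connect1; rewrite /induced_rel aW bW.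
have xK : x \in K by rewrite inE xW connect0.
have yNK : y \notin K by rewrite inE yW.
exists (K :|: (S :\: W)), (S :\: K), v; split.
- apply/setP => z; rewrite !(in_setU, in_setD).
  case: (boolP (z \in K)) => [/K_W/sWS -> //|_].
  by case: (z \in S); case: (z \in W).
- apply: proper_card; apply/properP; split.
    by apply/subsetP => z; rewrite in_setU in_setD => /orP[/K_W/sWS|/andP[]].
  by exists y; [apply: sWS | rewrite in_setU in_setD (negbTE yNK) yW].
- apply: proper_card; apply/properP; split; first exact: subsetDl.
  by exists x; [apply/sWS/K_W | rewrite in_setD xK].
- apply/subsetP => z; rewrite in_setI !(in_setU, in_setD).
  case/andP=> /orP[zK|zSW] /andP[zNK _]; first by rewrite zK in zNK.
  by apply: sSW_v; rewrite in_setD.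
- move=> a b; rewrite !(in_setD, in_setU) => /andP[aNSK aS] /andP[bNK_SW /andP[bNK bS]].
  have aK : a \in K by case: (a \in K) aNSK aS => //= /negP aNS /andP[_ /aNS].
  have bW : b \in W by move: bNK_SW; rewrite (negbTE bNK) bS andbT negbK.
  by apply/negP => /(K_closed a b aK bW); apply/negP.
Qed.

Lemma nonseparable_of_not_separable (S : {set T}) r :
  r \in S -> ~ separable S -> nonseparable_on e S.
Proof.
move=> rS nsep.
have conn (W : {set T}) v x y : W \subset S -> S :\: W \subset [set v] ->
    x \in W -> y \in W -> connect (induced_rel e W) x y.
  move=> sWS sSW xW yW; apply/negPn/negP => xNy; apply: nsep.
  exact: separable_of_disconnected sWS sSW xW yW xNy.
split; first split.
- by apply/set0Pn; exists r.
- by move=> x y; apply: (conn S r) => //; rewrite setDv sub0set.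
- move=> v vS x y; apply: (conn _ v); first exact: subsetDl.
  by rewrite setDDr setDv set0U subsetIr.
Qed.

Lemma nonseparable_sub_block (S : {set T}) : 1 < #|S| -> nonseparable_on e S ->
  exists2 B : {set T}, S \subset B & is_block e B.
Proof.
move: {2}#|~: S| (erefl #|~: S|) => n; elim/ltn_ind: n S => n IH S compl_n S_gt1 S_ns.
have [[S' [sSS' S'_gt1 S'_ns S'_neq]]|maxS] := classic (exists S' : {set T},
  [/\ S \subset S', 1 < #|S'|, nonseparable_on e S' & S' != S]).
  have lt_compl : #|~: S'| < n.
    by rewrite -compl_n; apply: proper_card; rewrite properC properEneq eq_sym S'_neq.
  have [B sS'B blockB] := IH _ lt_compl S' erefl S'_gt1 S'_ns.
  by exists B => //; apply: subset_trans sS'B.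
exists S => //; split=> //; split=> // S' sSS' S'_gt1 S'_ns.
by apply/eqP/negPn/negP => S'_neq; apply: maxS; exists S'.
Qed.

Lemma cactus_rooted_colorable (S : {set T}) r :
  simple_graph e -> cactus e -> girth_ge4 e -> r \in S -> rooted_colorable S r.
Proof.
move=> [e_sym e_irr] e_cactus e_girth.
move: {2}#|S| (erefl #|S|) => n; elim/ltn_ind: n S r => n IH S r card_S rS.
have [[S1 [S2 [u [defS lt1 lt2 cap no_cross]]]]|nsep] := classic (separable S).
  have col1 : {in S1, forall x, rooted_colorable S1 x}.
    by move=> x; apply: (IH #|S1|); rewrite -?card_S.
  have col2 : {in S2, forall x, rooted_colorable S2 x}.
    by move=> x; apply: (IH #|S2|); rewrite -?card_S.
  rewrite -defS in rS *; case/setUP: rS => [r1|r2].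
    exact (rooted_colorable_union e_sym cap no_cross col1 col2 r1).
  rewrite setUC; rewrite setIC in cap.
  exact (rooted_colorable_union e_sym cap (no_cross_edgesC e_sym no_cross) col2 col1 r2).
have [S_le2|S_gt2] := leqP #|S| 2; first exact: rooted_colorable_small.
have S_ns := nonseparable_of_not_separable rS nsep.
have [B sSB blockB] := nonseparable_sub_block (ltnW S_gt2) S_ns.
have [[x [y [_ [defB _]]]]|cycB] := e_cactus B blockB.
  by move: (subset_leq_card sSB); rewrite defB cards2; case: (x != y); lia.
apply: (rooted_colorable_sub sSB).
exact: cycle_rooted_colorable e_girth cycB (subsetP sSB r rS).
Qed.

Lemma ab_colorable_of_coloring21 f : coloring21 [set: T] f -> ab_colorable e 2 1.
Proof.
move=> [le2 proper indep].
have col_val x : (inord (f x) : 'I_(2 + 1)) = f x :> nat.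
  by rewrite inordK // ltnS le2 ?in_setT.
exists (fun x => inord (f x)) => i; case: ifP => i_lt2 x y.
all: rewrite !inE => /eqP/(congr1 val)/= fx /eqP/(congr1 val)/= fy; rewrite !col_val in fx fy.
  apply/negP => xy; move: (proper x y (in_setT x) (in_setT y) xy).
  by rewrite fx fy eqxx.
have i2 : i = 2 :> nat by have := ltn_ord i; lia.
rewrite i2 in fx fy => xNy; split=> [|z].
  by apply/negP => xy; move: (proper x y (in_setT x) (in_setT y) xy); rewrite fx fy.
apply/negP => /andP[xz zy]; move/eqP: xNy; apply.
exact: indep (in_setT x) (in_setT y) (in_setT z) fx fy xz zy.
Qed.

End Coloring21.

Theorem mainTheorem13 (T : finType) (e : rel T) :
  simple_graph e -> cactus e -> girth_ge4 e -> ab_colorable e 2 1.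
Proof.
move=> e_simple e_cactus e_girth.
have [f f_col] : exists f, coloring21 e [set: T] f.
  apply: colorable21_of_rooted => x _.
  exact: cactus_rooted_colorable e_simple e_cactus e_girth (in_setT x).
exact: ab_colorable_of_coloring21 f_col.
Qed.
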